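(* Let $A$ be a non-negative $d\times d$ matrix with $\rho(A)>1$. If $X$ is a local minimum of problem (P), then $X\le A$ entrywise and $\rho(X)=1$.
   Context: $\rho(\cdot)$ denotes spectral radius and $\|\cdot\|$ the Frobenius norm $\|X\|=\sqrt{\sum_{i,j}x_{ij}^2}$. Problem (P) for a non-negative square matrix $A$ is: minimize $\|X-A\|$ subject to $X\ge 0$ (entrywise) and $\rho(X)\le1$. A local minimum of (P) is a feasible $X$ for which there is a neighbourhood $U$ of $X$ with $\|Y-A\|\ge\|X-A\|$ for all feasible $Y\in U$. *)

(* Real numbers are modelled by an arbitrary real closed field R
   (rcfType); complex numbers a + b i are encoded as pairs (a, b) of reals. *)
From HB Require Import structures.
From mathcomp Require Import all_boot all_order all_algebra.
Set Implicit Arguments. Unset Strict Implicit. Unset Printing Implicit Defensive.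
Import Order.TTheory GRing.Theory Num.Theory.
Local Open Scope ring_scope.

(* Evaluation of a real polynomial p at the complex number a + b i,
   by Horner's scheme in C = R x R: returns (Re p(a+bi), Im p(a+bi)). *)
Definition chorner (R : rcfType) (p : {poly R}) (a b : R) : R * R :=
  foldr (fun c (u : R * R) => (u.1 * a - u.2 * b + c, u.1 * b + u.2 * a))
        (0, 0) (polyseq p).

Definition ceigen (R : rcfType) (d : nat) (X : 'M[R]_d) (a b : R) : Prop :=
  chorner (char_poly X) a b = (0, 0).

Definition cmod (R : rcfType) (a b : R) : R := Num.sqrt (a ^+ 2 + b ^+ 2).

Definition spectral_radius_is (R : rcfType) (d : nat) (X : 'M[R]_d) (r : R) : Prop :=
  (forall a b, ceigen X a b -> cmod a b <= r) /\
  (exists a b, ceigen X a b /\ cmod a b = r).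

Definition frob (R : rcfType) (d : nat) (X : 'M[R]_d) : R :=
  Num.sqrt (\sum_(i < d) \sum_(j < d) X i j ^+ 2).

Definition nonneg_mx (R : rcfType) (d : nat) (X : 'M[R]_d) : Prop :=
  forall i j, 0 <= X i j.

Definition feasibleP (R : rcfType) (d : nat) (X : 'M[R]_d) : Prop :=
  nonneg_mx X /\ exists r, spectral_radius_is X r /\ r <= 1.

Definition local_minP (R : rcfType) (d : nat) (A X : 'M[R]_d) : Prop :=
  feasibleP X /\
  exists eps : R, 0 < eps /\
    forall Y : 'M[R]_d, feasibleP Y -> frob (Y - X) < eps ->
      frob (X - A) <= frob (Y - A).

From HB Require Import structures.
From mathcomp Require Import all_boot all_order all_algebra.
From mathcomp Require Import polyrcf complex lra.
Set Implicit Arguments. Unset Strict Implicit. Unset Printing Implicit Defensive.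
Import Order.TTheory GRing.Theory Num.Theory.
Local Open Scope ring_scope.

(* Both claims come from moving a local minimum X towards A inside the
   feasible set.  The tool is the Collatz-Wielandt bound: a non-negative Y
   has all eigenvalues of modulus at most c once Y v <= c v for some positive
   vector v; conversely a non-negative X with rho(X) < s has a positive v
   with X v < s v (the row sums of adj(s I - X)).  If X_ij > A_ij, lowering
   that entry keeps such a v, so stays feasible and gets closer to A.  If
   rho(X) < 1, then X + t (A - X) still satisfies Y v <= v for small t > 0
   and lies at distance (1 - t) ||X - A|| from A; hence X = A, which
   contradicts rho(A) > 1. *)

Lemma seq_argmax (R : realDomainType) (T : eqType) (f : T -> R) (s : seq T) :
  s != [::] -> exists2 x, x \in s & forall y, y \in s -> f y <= f x.
Proof.
elim: s => [|x s IHs] // _.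
have [->|s_neq0] := eqVneq s [::].
  by exists x; rewrite ?mem_seq1 // => y; rewrite mem_seq1 => /eqP ->.
have [z zs zmax] := IHs s_neq0.
have [fxz|fzx] := leP (f x) (f z).
  exists z; first by rewrite inE zs orbT.
  by move=> y; rewrite inE => /orP[/eqP->|/zmax].
exists x; first by rewrite inE eqxx.
by move=> y; rewrite inE => /orP[/eqP->//|/zmax fyz]; rewrite (le_trans fyz (ltW fzx)).
Qed.

Lemma exists_pos_lower_bound (R : realDomainType) (I : finType) (f : I -> R) :
  (forall i, 0 < f i) -> exists2 e, 0 < e & forall i, e <= f i.
Proof.
move=> f_gt0; exists (\big[Num.min/1]_i f i).
  by apply: (big_ind (fun x => 0 < x)) => // x y x0 y0; rewrite lt_min x0.
by move=> i; rewrite (bigD1 i) //= ge_min lexx.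
Qed.

Section ComplexEigenvalues.
Variable R : rcfType.
Local Notation toC := (real_complex R).

Lemma chornerE (p : {poly R}) a b :
  chorner p a b = (complex.Re (map_poly toC p).[(a +i* b)%C],
                   complex.Im (map_poly toC p).[(a +i* b)%C]).
Proof.
rewrite /chorner map_polyE horner_Poly.
elim: (polyseq p) => [|c s IHs] //=.
by rewrite IHs; case: (horner_rec _ _) => x y /=; rewrite addr0.
Qed.

Variable d : nat.
Implicit Types X : 'M[R]_d.

Lemma ceigenE X a b :
  ceigen X a b <-> root (char_poly (map_mx toC X)) (a +i* b)%C.
Proof.
rewrite /ceigen chornerE -map_char_poly rootE.
case: ((map_poly toC (char_poly X)).[(a +i* b)%C]) => x y /=.
by split=> [[-> ->]|/eqP[-> ->]].
Qed.

Lemma spectral_radius_exists X : (0 < d)%N -> exists r, spectral_radius_is X r.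
Proof.
move=> d_gt0.
pose M := map_mx toC X.
have [rs charM] := closed_field_poly_normal (char_poly M).
rewrite (monicP (char_poly_monic M)) scale1r in charM.
have rs_neq0 : rs != [::].
  apply: contraTneq d_gt0 => rs0.
  by have := size_char_poly M; rewrite charM rs0 big_nil size_poly1 => -[<-].
pose modC (z : R[i]) := cmod (complex.Re z) (complex.Im z).
have [z zrs zmax] := seq_argmax modC rs_neq0.
exists (modC z); split.
  by move=> a b /ceigenE; rewrite charM root_prod_XsubC => /zmax.
exists (complex.Re z), (complex.Im z); split => //.
by apply/ceigenE; rewrite charM root_prod_XsubC; case: z zrs {zmax}.
Qed.

Lemma spectral_radius_unique X r1 r2 :
  spectral_radius_is X r1 -> spectral_radius_is X r2 -> r1 = r2.
Proof.
move=> [le1 [a1 [b1 [e1 m1]]]] [le2 [a2 [b2 [e2 m2]]]].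
by apply/eqP; rewrite eq_le -{1}m1 -{2}m2 le2 // le1.
Qed.

Lemma spectral_radius_ge0 X r : spectral_radius_is X r -> 0 <= r.
Proof. by move=> [_ [a [b [_ <-]]]]; exact: sqrtr_ge0. Qed.

End ComplexEigenvalues.

Lemma spectral_radius_dim_gt0 (R : rcfType) d (X : 'M[R]_d) r :
  spectral_radius_is X r -> (0 < d)%N.
Proof.
case: d X => // X [_ [a [b [/ceigenE + _]]]].
by rewrite /char_poly det_mx00 rootC oner_eq0.
Qed.

Lemma char_poly_trmx (F : comNzRingType) n (M : 'M[F]_n) :
  char_poly M^T = char_poly M.
Proof.
rewrite /char_poly -det_tr; congr (\det _).
by apply/matrixP => i j; rewrite !mxE eq_sym.
Qed.

Section CollatzWielandt.
Variable R : rcfType.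
Local Notation normc := (@Normc.normc R).

Lemma normcE (z : R[i]) : `|z| = (normc z)%:C%C.
Proof. by case: z => x y; rewrite normc_def. Qed.

Lemma normc_sum (I : finType) (f : I -> R[i]) :
  normc (\sum_i f i) <= \sum_i normc (f i).
Proof.
rewrite -lecR -normcE rmorph_sum /=.
apply: le_trans (ler_norm_sum _ _ _) _.
by apply: ler_sum => i _; rewrite normcE.
Qed.

Lemma normc_real (x : R) : 0 <= x -> normc x%:C%C = x.
Proof. by move=> x0; rewrite /Normc.normc /= expr0n addr0 sqrtr_sqr ger0_norm. Qed.

Variable d : nat.

(* With w an eigenvector for lambda and k maximising |w_k| / v_k:
   |lambda| |w_k| <= sum_l Y_kl |w_l| <= (|w_k| / v_k) sum_l Y_kl v_l <= c |w_k|. *)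
Lemma cmod_le_of_subinvariant (Y : 'M[R]_d) (v : 'I_d -> R) c :
  nonneg_mx Y -> (forall k, 0 < v k) ->
  (forall k, \sum_l Y k l * v l <= c * v k) ->
  forall a b, ceigen Y a b -> cmod a b <= c.
Proof.
move=> Y0 v_gt0 Yv a b /ceigenE.
set M := map_mx (real_complex R) Y; set lam := (a +i* b)%C => rootM.
have : root (char_poly M^T) lam by rewrite char_poly_trmx.
rewrite -eigenvalue_root_char => /eigenvalueP [w Mw w_neq0].
have eigw k : \sum_l M k l * w 0 l = lam * w 0 k.
  move/matrixP: Mw => /(_ 0 k); rewrite !mxE => <-.
  by apply: eq_bigr => l _; rewrite !mxE mulrC.
have [i0 [j0 wj0]] := matrix0Pn _ w_neq0.
rewrite (ord1 i0) in wj0.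
pose g k := normc (w 0 k) / v k.
have [k _ gmax] := @arg_maxP _ _ _ j0 xpredT g isT.
have gk_gt0 : 0 < g k.
  apply: lt_le_trans (gmax j0 isT); rewrite divr_gt0 // lt_def.
  rewrite (contra_neq (@Normc.eq0_normc _ _)) //.
  by case: (w 0 j0) => x y; exact: sqrtr_ge0.
have normwk : normc (w 0 k) = g k * v k by rewrite /g divfK // gt_eqF.
have normw l : normc (w 0 l) <= g k * v l by rewrite -ler_pdivrMr //; exact: gmax.
suff : normc lam * normc (w 0 k) <= c * normc (w 0 k).
  by rewrite ler_pM2r // normwk mulr_gt0.
rewrite -Normc.normcM -eigw; apply: le_trans (normc_sum _) _.
apply: (@le_trans _ _ (\sum_l Y k l * (g k * v l))).
  apply: ler_sum => l _; rewrite Normc.normcM mxE normc_real //.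
  exact: ler_wpM2l.
rewrite normwk mulrCA.
under eq_bigr => l _ do rewrite mulrCA.
by rewrite -mulr_sumr ler_pM2l.
Qed.

End CollatzWielandt.

Section StrictSubinvariantVector.
Variable R : rcfType.
Variable d : nat.
Implicit Types X : 'M[R]_d.

Lemma char_poly_neq0_gt_radius X r t :
  spectral_radius_is X r -> r < t -> (char_poly X).[t] != 0.
Proof.
move=> Xr rt; apply/eqP => char_t.
have t_ge0 : 0 <= t := le_trans (spectral_radius_ge0 Xr) (ltW rt).
have : ceigen X t 0.
  apply/ceigenE; rewrite -map_char_poly rootE.
  by rewrite (_ : (t +i* 0)%C = (real_complex R) t) // horner_map char_t rmorph0.
move/(proj1 Xr); rewrite /cmod expr0n addr0 sqrtr_sqr ger0_norm //.
by rewrite leNgt rt.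
Qed.

Lemma char_poly_gt0_gt_radius X r t :
  spectral_radius_is X r -> r < t -> 0 < (char_poly X).[t].
Proof.
move=> Xr rt; rewrite lt_def (char_poly_neq0_gt_radius Xr rt) /=.
have := @poly_pinfty_gt_lc _ (char_poly X).
rewrite (monicP (char_poly_monic X)) => /(_ ltr01) [n0 char_large].
rewrite leNgt; apply/negP => char_t.
pose T := Num.max t n0.
have tT : t <= T by rewrite le_max lexx.
have charT : 1 <= (char_poly X).[T] by apply: char_large; rewrite le_max lexx orbT.
have [x /andP[tx _] rootx] := @poly_ivt _ (char_poly X) _ _ tT (ltac:(by rewrite (ltW char_t) (le_trans ler01 charT))).
by move: (char_poly_neq0_gt_radius Xr (lt_le_trans rt tx)); rewrite -rootE rootx.
Qed.

Definition adj_row_sum X k : {poly R} := \sum_j (\adj (char_poly_mx X)) k j.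

(* Row sums of (t I - X) adj(t I - X) = char_poly X (t) I. *)
Lemma horner_adj_row_sum X k t :
  t * (adj_row_sum X k).[t] - \sum_l X k l * (adj_row_sum X l).[t]
  = (char_poly X).[t].
Proof.
suff rowk : 'X * adj_row_sum X k - \sum_l (X k l)%:P * adj_row_sum X l = char_poly X.
  rewrite -rowk hornerD hornerN hornerM hornerX !horner_sum.
  by congr (_ - _); apply: eq_bigr => l _; rewrite hornerM hornerC.
have rowk := congr1 (fun M : 'M[{poly R}]_d => \sum_j M k j) (mul_mx_adj (char_poly_mx X)).
have -> : char_poly X = \sum_j (\det (char_poly_mx X))%:M k j.
  rewrite (bigD1 k) //= big1 ?addr0; first by rewrite mxE eqxx mulr1n.
  by move=> j /negPf kj; rewrite mxE eq_sym kj mulr0n.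
rewrite -rowk /=; apply/esym.
under eq_bigr => j _ do rewrite mxE.
rewrite exchange_big (eq_bigr (fun l => char_poly_mx X k l * adj_row_sum X l));
  last by move=> l _; rewrite /adj_row_sum mulr_sumr.
under eq_bigr => l _ do rewrite !mxE mulrBl.
rewrite sumrB (bigD1 k) //= big1 ?addr0; first by rewrite eqxx mulr1n.
by move=> l /negPf kl; rewrite eq_sym kl mulr0n mul0r.
Qed.

(* At the index m minimising adj_row_sum at t, the identity above reads
   char_poly X (t) <= adj_row_sum X m (t) * (t - sum_l X_ml). *)
Lemma adj_row_sum_gt0_above_row_sums X r t :
  nonneg_mx X -> spectral_radius_is X r -> r < t ->
  (forall k, \sum_l X k l <= t) -> forall k, 0 < (adj_row_sum X k).[t].
Proof.
move=> X0 Xr rt rowt k.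
have [m _ qmin] := @arg_minP _ _ _ k xpredT (fun k => (adj_row_sum X k).[t]) isT.
apply: lt_le_trans (qmin k isT); rewrite ltNge; apply/negP => qm_le0.
have : (char_poly X).[t] <= (adj_row_sum X m).[t] * (t - \sum_l X m l).
  rewrite -(horner_adj_row_sum X m) mulrBr (mulrC _ t) lerD2l lerN2 mulr_sumr.
  by apply: ler_sum => l _; rewrite mulrC; apply: ler_wpM2l; [exact: X0 | exact: qmin].
rewrite leNgt => /negP; apply; apply: le_lt_trans (char_poly_gt0_gt_radius Xr rt).
by apply: mulr_le0_ge0; rewrite // subr_ge0.
Qed.

(* Positivity propagates down from T as long as no adj_row_sum vanishes:
   a zero at s1 would make the row identity read -sum_l X_kl q_l(s1) > 0. *)
Lemma adj_row_sum_gt0_down X r s1 T :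
  nonneg_mx X -> spectral_radius_is X r -> r < s1 -> s1 < T ->
  (forall k, 0 < (adj_row_sum X k).[T]) ->
  (forall k, {in `]s1, T[, forall x, ~~ root (adj_row_sum X k) x}) ->
  forall k, 0 < (adj_row_sum X k).[s1].
Proof.
move=> X0 Xr rs1 s1T qT noroot k.
have q_ge0 l : 0 <= (adj_row_sum X l).[s1].
  rewrite leNgt; apply/negP => q_lt0.
  have [x xin rootx] := @poly_ivtoo _ (adj_row_sum X l) _ _ (ltW s1T) (ltac:(by rewrite pmulr_llt0 ?qT)).
  by move: (noroot l x xin); rewrite rootx.
rewrite lt_def q_ge0 andbT; apply/eqP => qk0.
have := horner_adj_row_sum X k s1; rewrite qk0 mulr0 sub0r => charE.
have : 0 <= \sum_l X k l * (adj_row_sum X l).[s1].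
  by apply: sumr_ge0 => l _; apply: mulr_ge0.
by rewrite -oppr_le0 charE leNgt (char_poly_gt0_gt_radius Xr rs1).
Qed.

Lemma strict_subinvariant_vector X r s :
  nonneg_mx X -> spectral_radius_is X r -> r < s ->
  exists v : 'I_d -> R, (forall k, 0 < v k) /\ (forall k, \sum_l X k l * v l < s * v k).
Proof.
move=> X0 Xr rs.
pose q := adj_row_sum X.
pose T := Num.max (s + 1) (\sum_k \sum_l X k l).
have sT : s < T by rewrite lt_max ltrDl ltr01.
have qT : forall k, 0 < (q k).[T].
  apply: adj_row_sum_gt0_above_row_sums Xr (lt_trans rs sT) _ => // k.
  rewrite /T le_max; apply/orP; right; rewrite [leRHS](bigD1 k) //= lerDl.
  by apply: sumr_ge0 => i _; apply: sumr_ge0 => j _.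
pose Q := \prod_k q k.
have QT : 0 < Q.[T] by rewrite horner_prod; apply: prodr_gt0.
have Q_neq0 : Q != 0 by apply: contraTneq QT => ->; rewrite horner0 ltxx.
have q_noroot s1 : {in `]s1, T[, forall x, ~~ root Q x} ->
    forall k, {in `]s1, T[, forall x, ~~ root (q k) x}.
  move=> noQ k x /noQ; apply: contra; rewrite !rootE horner_prod (bigD1 k) //=.
  by move=> /eqP->; rewrite mul0r.
have prev_s : prev_root Q s T = s.
  have := prev_root_in Q s T; rewrite (min_idPl (ltW sT)) in_itv /= => /andP[s_le _].
  have q_gt0 := adj_row_sum_gt0_down X0 Xr (lt_le_trans rs s_le) (prev_root_lt sT Q_neq0)
    qT (q_noroot _ (@prev_noroot _ Q s T)).
  move: q_gt0; case: prev_rootP => [Q0|y _ Qy _ _ qy_gt0|c _ -> _ _].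
  - by rewrite Q0 eqxx in Q_neq0.
  - have : 0 < Q.[y] by rewrite horner_prod; apply: prodr_gt0 => k _; exact: qy_gt0.
    by rewrite Qy ltxx.
  - by rewrite (min_idPl (ltW sT)).
exists (fun k => (q k).[s]); split => k.
  have := q_noroot _ (@prev_noroot _ Q s T); rewrite prev_s => noq.
  exact: (adj_row_sum_gt0_down X0 Xr rs sT qT noq).
by rewrite -subr_gt0 horner_adj_row_sum (char_poly_gt0_gt_radius Xr rs).
Qed.

End StrictSubinvariantVector.

Section Frobenius.
Variables (R : rcfType) (d : nat).
Implicit Types M N : 'M[R]_d.

Lemma frob_ge0 M : 0 <= frob M.
Proof. exact: sqrtr_ge0. Qed.

Lemma frobZ (c : R) M : frob (c *: M) = `|c| * frob M.
Proof.
rewrite /frob -sqrtr_sqr -sqrtrM ?sqr_ge0 //; congr Num.sqrt.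
rewrite mulr_sumr; apply: eq_bigr => k _; rewrite mulr_sumr; apply: eq_bigr => l _.
by rewrite mxE exprMn.
Qed.

Lemma frob_eq0 M : frob M = 0 -> M = 0.
Proof.
move/eqP; rewrite sqrtr_eq0 pair_bigA /= => sum_le0.
have sq_ge0 (p : 'I_d * 'I_d) : true -> 0 <= M p.1 p.2 ^+ 2 by move=> _; exact: sqr_ge0.
have sum0 : \sum_(p : 'I_d * 'I_d) M p.1 p.2 ^+ 2 = 0.
  by apply/eqP; rewrite eq_le sum_le0 sumr_ge0.
apply/matrixP => k l; rewrite mxE; apply/eqP; rewrite -sqrf_eq0; apply/eqP.
exact: (@psumr_eq0P _ _ xpredT (fun p => M p.1 p.2 ^+ 2) sq_ge0 sum0 (k, l) isT).
Qed.

Lemma frob_lt M N i j :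
  (forall k l, M k l ^+ 2 <= N k l ^+ 2) -> M i j ^+ 2 < N i j ^+ 2 -> frob M < frob N.
Proof.
move=> le_sq lt_sq.
have lt_sum : \sum_k \sum_l M k l ^+ 2 < \sum_k \sum_l N k l ^+ 2.
  rewrite !pair_bigA (bigD1 (i, j)) //= [ltRHS](bigD1 (i, j)) //=.
  by apply: ltr_leD => //; apply: ler_sum => p _; exact: le_sq.
rewrite /frob ltr_sqrt // (le_lt_trans _ lt_sum) //.
by apply: sumr_ge0 => k _; apply: sumr_ge0 => l _; exact: sqr_ge0.
Qed.

Lemma frob_delta_mx i j : frob (delta_mx i j : 'M[R]_d) = 1.
Proof.
rewrite /frob pair_bigA (bigD1 (i, j)) //= big1 ?addr0 ?mxE ?eqxx ?expr1n ?sqrtr1 //.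
by case=> k l; rewrite xpair_eqE mxE /= => /negPf ->; rewrite mulr0n expr0n.
Qed.

End Frobenius.

Section Feasibility.
Variables (R : rcfType) (d : nat).
Implicit Types X Y : 'M[R]_d.

Lemma feasibleP_of_cmod_le1 Y : (0 < d)%N -> nonneg_mx Y ->
  (forall a b, ceigen Y a b -> cmod a b <= 1) -> feasibleP Y.
Proof.
move=> d_gt0 Y0 eig_le1; split=> //.
have [r Yr] := spectral_radius_exists Y d_gt0; exists r; split=> //.
by case: Yr => _ [a [b [ab <-]]]; exact: eig_le1.
Qed.

Lemma feasibleP_le X Y :
  nonneg_mx Y -> (forall k l, Y k l <= X k l) -> feasibleP X -> feasibleP Y.
Proof.
move=> Y0 YX [X0 [r [Xr r_le1]]].
apply: (feasibleP_of_cmod_le1 (spectral_radius_dim_gt0 Xr) Y0) => a b ab.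
rewrite leNgt; apply/negP => ab_gt1.
pose s := (1 + cmod a b) / 2.
have rs : r < s by rewrite /s; lra.
have [v [v_gt0 Xv]] := strict_subinvariant_vector X0 Xr rs.
have : cmod a b <= s.
  apply: (cmod_le_of_subinvariant Y0 v_gt0 _ ab) => k.
  apply/ltW/(le_lt_trans _ (Xv k)); apply: ler_sum => l _.
  by apply: ler_wpM2r; [exact: ltW | exact: YX].
by rewrite /s; lra.
Qed.

(* A positive v with X v < v leaves room t (A v) <= v - X v for all small t. *)
Lemma feasibleP_convex_step A X r :
  nonneg_mx A -> nonneg_mx X -> spectral_radius_is X r -> r < 1 ->
  exists2 t0, 0 < t0 & forall t, 0 <= t <= t0 -> feasibleP (X + t *: (A - X)).
Proof.
move=> A0 X0 Xr r_lt1.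
have [v [v_gt0 Xv]] := strict_subinvariant_vector X0 Xr r_lt1.
have Xv_ge0 k : 0 <= \sum_l X k l * v l by apply: sumr_ge0 => l _; rewrite mulr_ge0 // ltW.
have Av_ge0 k : 0 <= \sum_l A k l * v l by apply: sumr_ge0 => l _; rewrite mulr_ge0 // ltW.
have [e e_gt0 e_le] : exists2 e, 0 < e &
    forall k, e <= (v k - \sum_l X k l * v l) / (\sum_l A k l * v l + 1).
  apply: exists_pos_lower_bound => k; rewrite divr_gt0 //.
    by move: (Xv k); rewrite mul1r subr_gt0.
  by rewrite ltr_wpDl.
exists (Num.min 1 e); first by rewrite lt_min ltr01.
move=> t /andP[t_ge0]; rewrite le_min => /andP[t_le1 t_le_e].
have YE k l : (X + t *: (A - X)) k l = (1 - t) * X k l + t * A k l.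
  by rewrite !mxE; lra.
have Y0 : nonneg_mx (X + t *: (A - X)).
  by move=> k l; rewrite YE addr_ge0 // mulr_ge0 // subr_ge0.
apply: (feasibleP_of_cmod_le1 (spectral_radius_dim_gt0 Xr) Y0).
apply: (cmod_le_of_subinvariant Y0 v_gt0) => k.
under eq_bigr => l _ do rewrite YE mulrDl -!mulrA.
rewrite big_split /= -!mulr_sumr mul1r.
have : t * (\sum_l A k l * v l + 1) <= v k - \sum_l X k l * v l.
  by rewrite -ler_pdivlMr ?ltr_wpDl //; exact: le_trans t_le_e (e_le k).
by have := Xv_ge0 k; nra.
Qed.

End Feasibility.

Section LocalMinimum.
Variables (R : rcfType) (d : nat).
Implicit Types A X : 'M[R]_d.

Lemma local_minP_le A X : nonneg_mx A -> local_minP A X -> forall i j, X i j <= A i j.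
Proof.
move=> A0 [Xfeas [eps [eps_gt0 Xmin]]] i j; rewrite leNgt; apply/negP => AX.
have [X0 _] := Xfeas.
pose del := Num.min (X i j - A i j) (eps / 2).
have del_gt0 : 0 < del by rewrite lt_min subr_gt0 AX divr_gt0.
have del_le : del <= X i j - A i j by rewrite ge_min lexx.
have del_lt : del < eps by rewrite gt_min; apply/orP; right; lra.
pose Y := X - del *: delta_mx i j.
have YE k l : Y k l = X k l - del * ((k == i) && (l == j))%:R by rewrite !mxE.
have Yfeas : feasibleP Y.
  apply: feasibleP_le Xfeas => k l; rewrite YE.
    case: (boolP ((k == i) && (l == j))) => [/andP[/eqP-> /eqP->]|_].
      by rewrite mulr1; move: (A0 i j); lra.
    by rewrite mulr0 subr0.
  by rewrite gerBl; apply: mulr_ge0; [exact: ltW | exact: ler0n].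
have := Xmin Y Yfeas.
rewrite /Y addrAC subrr add0r -scaleNr frobZ frob_delta_mx mulr1 normrN gtr0_norm //.
move=> /(_ del_lt); rewrite leNgt => /negP; apply.
apply: (@frob_lt _ _ _ _ i j) => [k l|]; rewrite !mxE; last by rewrite !eqxx mulr1; nra.
case: (boolP ((k == i) && (l == j))) => [/andP[/eqP-> /eqP->]|_]; last by rewrite mulr0 addr0.
by rewrite mulr1; nra.
Qed.

Lemma local_minP_eq_of_radius_lt1 A X r :
  nonneg_mx A -> local_minP A X -> spectral_radius_is X r -> r < 1 -> X = A.
Proof.
move=> A0 [[X0 _] [eps [eps_gt0 Xmin]]] Xr r_lt1.
have [t0 t0_gt0 step_feas] := feasibleP_convex_step A0 X0 Xr r_lt1.
set F := frob (X - A).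
have F_ge0 : 0 <= F := frob_ge0 _.
pose t := Num.min (Num.min t0 1) (eps / (F + 1)).
have t_gt0 : 0 < t by rewrite !lt_min t0_gt0 ltr01 divr_gt0 //; lra.
have t_le1 : t <= 1 by rewrite !ge_min lexx orbT.
have tF_lt : t * F < eps.
  have : t <= eps / (F + 1) by rewrite ge_min lexx orbT.
  by rewrite ler_pdivlMr; [nra | lra].
have Yfeas : feasibleP (X + t *: (A - X)) by apply: step_feas; rewrite ltW //= !ge_min lexx.
have := Xmin _ Yfeas.
have -> : X + t *: (A - X) - X = (- t) *: (X - A).
  by rewrite addrAC subrr add0r scaleNr -scalerN opprB.
rewrite frobZ normrN gtr0_norm // -/F => /(_ tF_lt).
have -> : X + t *: (A - X) - A = (1 - t) *: (X - A).
  by apply/matrixP => k l; rewrite !mxE; lra.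
rewrite frobZ ger0_norm ?subr_ge0 // -/F => F_le.
apply/eqP; rewrite -subr_eq0; apply/eqP/frob_eq0; rewrite -/F; nra.
Qed.

End LocalMinimum.

Theorem lemma3 (R : rcfType) (d : nat) (A X : 'M[R]_d) :
  nonneg_mx A ->
  (exists r, spectral_radius_is A r /\ 1 < r) ->
  local_minP A X ->
  (forall i j, X i j <= A i j) /\ spectral_radius_is X 1.
Proof.
move=> A0 [rA [Ar rA_gt1]] Xmin; split; first exact: local_minP_le Xmin.
have [[_ [rX [Xr rX_le1]]] _] := Xmin.
have [rX1|rX_neq1] := eqVneq rX 1; first by rewrite -rX1.
have XA : X = A.
  by apply: local_minP_eq_of_radius_lt1 A0 Xmin Xr _; rewrite lt_neqAle rX_neq1.
by rewrite XA in Xr; move: (spectral_radius_unique Xr Ar); lra.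
Qed.
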